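(* Let $\beta$ be an algebraic number such that one of its conjugates (roots of its minimal polynomial over $\mathbb{Q}$) is a real number greater than $1$. Then $p_\beta(\alpha) < \infty$ for every $\alpha \in \mathbb{R}$.
   Context: For $\beta, \alpha \in \mathbb{C}$, $p_\beta(\alpha) \in \mathbb{Z}_{\geq 0}\cup\{\infty\}$ is the number of polynomials $f \in \mathbb{Z}_{\geq 0}[x]$ (non-negative integer coefficients) with $f(\beta) = \alpha$. *)

From HB Require Import structures.
From mathcomp Require Import all_boot all_order all_algebra.
From mathcomp Require Import reals.
From mathcomp.real_closed Require Import complex.
Set Implicit Arguments. Unset Strict Implicit. Unset Printing Implicit Defensive.
Import Order.TTheory GRing.Theory Num.Theory.
Local Open Scope ring_scope.

Definition algebraicQ (C : fieldType) (b : C) : Prop :=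
  exists p : {poly rat}, p != 0 /\ root (map_poly ratr p) b.

Definition minpolyQ (C : fieldType) (p : {poly rat}) (b : C) : Prop :=
  [/\ p \is monic, irreducible_poly p & root (map_poly ratr p) b].

Definition conjugateQ (C : fieldType) (b g : C) : Prop :=
  exists p : {poly rat}, minpolyQ p b /\ root (map_poly ratr p) g.

Definition eval_nat (C : fieldType) (f : {poly nat}) (b : C) : C :=
  (map_poly (fun n : nat => n%:R : C) f).[b].

(* p_b(a) < oo: finitely many f in Z_{>=0}[x] with f(b) = a. *)
Definition p_finite (C : fieldType) (b a : C) : Prop :=
  exists s : seq {poly nat}, forall f : {poly nat}, eval_nat f b = a -> f \in s.

From HB Require Import structures.
From mathcomp Require Import all_boot all_order all_algebra.
From mathcomp Require Import reals.
From mathcomp.real_closed Require Import complex.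
From Stdlib Require Import Classical.
From mathcomp Require Import lra.

Set Implicit Arguments.
Unset Strict Implicit.
Unset Printing Implicit Defensive.

Import Order.TTheory GRing.Theory Num.Theory.
Local Open Scope ring_scope.

(* If f(beta) = f0(beta) = alpha, then f - f0 is a rational polynomial vanishing
   at beta, hence at every conjugate of beta, in particular at the real conjugate
   r > 1, so f(r) = f0(r) =: m.  Since f has non-negative integer coefficients,
   each of them and r^(deg f) are at most m, which leaves finitely many f. *)

Lemma irreducible_root_conj (K C : fieldType) (phi : {rmorphism K -> C})
    (p q : {poly K}) (b g : C) :
  irreducible_poly p -> root (map_poly phi p) b -> root (map_poly phi p) g ->
  root (map_poly phi q) b -> root (map_poly phi q) g.
Proof.
move=> p_irr pb pg qb.
have /dvdpP [d ->] : p %| q.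
  apply/negPn; rewrite -irreducible_poly_coprime // -(coprimep_map phi).
  by apply/negP => /coprimep_root /(_ pb) /negP; apply.
by rewrite /root rmorphM hornerM (eqP pg) mulr0.
Qed.

Lemma eval_nat_ratr (C : numFieldType) (f : {poly nat}) (b : C) :
  eval_nat f b = (map_poly ratr (map_poly (fun n : nat => n%:R : rat) f)).[b].
Proof.
rewrite /eval_nat -map_poly_comp_id0 ?rmorph0 //.
by congr (_.[_]); apply: eq_map_poly => n /=; rewrite ratr_nat.
Qed.

Lemma eval_nat_conj (C : numFieldType) (p : {poly rat}) (b g : C)
    (f f0 : {poly nat}) :
  irreducible_poly p -> root (map_poly ratr p) b -> root (map_poly ratr p) g ->
  eval_nat f b = eval_nat f0 b -> eval_nat f g = eval_nat f0 g.
Proof.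
move=> p_irr pb pg fb.
pose natrat (h : {poly nat}) := map_poly (fun n : nat => n%:R : rat) h.
have /(irreducible_root_conj p_irr pb pg) :
    root (map_poly ratr (natrat f - natrat f0)) b.
  by rewrite /root raddfB hornerD hornerN -!eval_nat_ratr fb subrr.
by rewrite /root raddfB hornerD hornerN -!eval_nat_ratr subr_eq0 => /eqP.
Qed.

Lemma rmorph_eval_nat (C C' : fieldType) (phi : {rmorphism C -> C'})
    (f : {poly nat}) (x : C) :
  phi (eval_nat f x) = eval_nat f (phi x).
Proof.
rewrite /eval_nat -horner_map -map_poly_comp_id0 ?rmorph0 //.
by congr (_.[_]); apply: eq_map_poly => n /=; rewrite rmorph_nat.
Qed.

Lemma bernoulli_ineq (R : realDomainType) (x : R) n :
  -1 <= x -> 1 + n%:R * x <= (1 + x) ^+ n.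
Proof.
move=> x_ge_m1; elim: n => [|n IHn]; first by rewrite mul0r addr0 expr0.
rewrite exprSr -natr1.
have nx2_ge0 : 0 <= n%:R * x ^+ 2 by rewrite mulr_ge0 ?sqr_ge0.
have := ler_wpM2r (_ : 0 <= 1 + x) IHn.
rewrite expr2 in nx2_ge0; nra.
Qed.

Section NatPolyAtReal.
Variable R : realFieldType.
Implicit Types (f : {poly nat}) (r : R).

Lemma eval_nat_sum f r :
  eval_nat f r = \sum_(i < size f) (nth 0%N f i)%:R * r ^+ i.
Proof.
rewrite /eval_nat (@horner_coef_wide _ (size f)) ?size_poly //.
by apply: eq_bigr => i _; rewrite coef_map_id0.
Qed.

Lemma monomial_le_eval_nat f r i :
  0 <= r -> (nth 0%N f i)%:R * r ^+ i <= eval_nat f r.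
Proof.
move=> r_ge0; rewrite eval_nat_sum.
have term_ge0 (j : 'I_(size f)) : 0 <= (nth 0%N f j)%:R * r ^+ j.
  by rewrite mulr_ge0 ?exprn_ge0.
have [i_lt|i_ge] := ltnP i (size f).
  rewrite (bigD1 (Ordinal i_lt)) //= lerDl.
  by apply: sumr_ge0 => j _.
by rewrite nth_default // mul0r; apply: sumr_ge0 => j _.
Qed.

Lemma coef_le_eval_nat f r i : 1 <= r -> (nth 0%N f i)%:R <= eval_nat f r.
Proof.
move=> r_ge1; apply: le_trans (monomial_le_eval_nat f i (le_trans ler01 r_ge1)).
by rewrite ler_peMr ?exprn_ege1.
Qed.

Lemma expr_size_le_eval_nat f r :
  f != 0 -> 1 <= r -> r ^+ (size f).-1 <= eval_nat f r.
Proof.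
move=> f_neq0 r_ge1.
apply: le_trans (monomial_le_eval_nat f (size f).-1 (le_trans ler01 r_ge1)).
have lc_ge1 : (1 <= lead_coef f)%N by rewrite lt0n lead_coef_eq0.
by rewrite ler_peMl ?exprn_ge0 ?(le_trans ler01) ?ler1n.
Qed.

End NatPolyAtReal.

Lemma exists_expr_gt (R : archiRealFieldType) (r m : R) :
  1 < r -> exists n, m < r ^+ n.
Proof.
move=> r_gt1; have d_gt0 : 0 < r - 1 by rewrite subr_gt0.
pose n := Num.Def.archi_bound (`|m| / (r - 1)); exists n.
have := archi_boundP (divr_ge0 (normr_ge0 m) (ltW d_gt0)).
rewrite ltr_pdivrMr // -/n => m_lt.
have bern : 1 + n%:R * (r - 1) <= r ^+ n.
  by have := @bernoulli_ineq R (r - 1) n; rewrite subrKC; apply; lra.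
by have := ler_norm m; lra.
Qed.

Lemma bounded_natpoly_finite (D N : nat) :
  exists s : seq {poly nat}, forall f : {poly nat},
    (size f <= D)%N -> (forall i, nth 0%N f i < N)%N -> f \in s.
Proof.
exists [seq \poly_(i < D) (t (inord i) : nat) | t : {ffun 'I_D.+1 -> 'I_N}].
move=> f size_f coef_f; apply/imageP.
exists [ffun i : 'I_D.+1 => Ordinal (coef_f i)] => //.
apply/polyP => i; rewrite coef_poly; case: ltnP => [i_lt|i_ge].
  by rewrite ffunE /= inordK // ltnS ltnW.
by rewrite nth_default // (leq_trans size_f).
Qed.

Lemma eval_nat_le_finite (R : archiRealFieldType) (r m : R) :
  1 < r -> exists s : seq {poly nat}, forall f, eval_nat f r <= m -> f \in s.
Proof.
move=> r_gt1; have r_ge1 := ltW r_gt1.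
have [D m_lt] := exists_expr_gt m r_gt1.
have [s sP] := bounded_natpoly_finite D (Num.Def.archi_bound `|m|).
exists s => f f_le; apply: sP => [|i].
  have [->|f_neq0] := eqVneq f 0; first by rewrite size_poly0.
  have := le_lt_trans (le_trans (expr_size_le_eval_nat f_neq0 r_ge1) f_le) m_lt.
  by rewrite ltr_eXn2l // prednK // size_poly_gt0.
rewrite -(ltr_nat R); apply: le_lt_trans (archi_boundP (normr_ge0 m)).
exact: le_trans (coef_le_eval_nat f i r_ge1) (le_trans f_le (ler_norm m)).
Qed.

Local Open Scope complex_scope.

Theorem proposition5 (R : realType) (beta : R[i]) :
  algebraicQ beta ->
  (exists g : R[i], conjugateQ beta g /\ g \is Num.real /\ 1 < g) ->
  forall alpha : R, p_finite beta alpha%:C.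
Proof.
(* [algebraicQ beta] already follows from the minimal polynomial in [conjugateQ]. *)
move=> _ [g [[p [[_ p_irr p_beta] p_g] [/complex_realP [r g_r] r_gt1]]]] alpha.
subst g; rewrite ltcR in r_gt1.
have [[f0 f0_beta] | no_preimage] := classic (exists f0, eval_nat f0 beta = alpha%:C).
  have [s sP] := eval_nat_le_finite (eval_nat f0 r) r_gt1.
  exists s => f f_beta; apply: sP.
  have f_r : eval_nat f r = eval_nat f0 r.
    apply: (@complexI R); rewrite !rmorph_eval_nat.
    by apply: eval_nat_conj p_irr p_beta p_g _; rewrite f_beta.
  by rewrite f_r.
by exists [::] => f f_beta; case: no_preimage; exists f.
Qed.
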